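(* For every integer $n\ge 4$, \[ \gamma_{2t}(K_n\Box K_{n+2})=\begin{cases}(3n+4)/2, & n\equiv 0\pmod 2,\\ (3n+3)/2, & n\equiv 1\pmod 4,\\ (3n+5)/2, & n\equiv 3\pmod 4.\end{cases} \]
   Context: For a graph $G=(V,E)$, a set $S\subseteq V$ is a total $2$-dominating set if every vertex of $V$ (including those in $S$) is adjacent to at least $2$ vertices of $S$; $\gamma_{2t}(G)$ is the minimum cardinality of such a set. $G\Box H$ denotes the Cartesian product: vertex set $V(G)\times V(H)$, with $(u_1,v_1)\sim(u_2,v_2)$ iff either $u_1=u_2$ and $v_1\sim v_2$, or $v_1=v_2$ and $u_1\sim u_2$. $K_n$ is the complete graph on $n$ vertices. *)

From mathcomp Require Import all_boot.
Set Implicit Arguments. Unset Strict Implicit. Unset Printing Implicit Defensive.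

Definition Kadj (n : nat) : rel 'I_n := fun u v => u != v.

Definition cartadj (T U : finType) (e : rel T) (f : rel U) : rel (T * U) :=
  fun x y => ((x.1 == y.1) && f x.2 y.2) || ((x.2 == y.2) && e x.1 y.1).

Definition total2dom (T : finType) (e : rel T) (S : {set T}) : bool :=
  [forall v : T, 2 <= #|[set u in S | e v u]|].

(* gamma_{2t}(G): minimum cardinality of a total 2-dominating set
   (defaults to #|T|.+1 if none exists). *)
Definition gamma2t (T : finType) (e : rel T) : nat :=
  \big[minn/#|T|.+1]_(S : {set T} | total2dom e S) #|S|.

Definition KK (n m : nat) : rel ('I_n * 'I_m) := cartadj (@Kadj n) (@Kadj m).
Arguments KK n m : clear implicits.

From mathcomp Require Import all_boot zify.
Set Implicit Arguments. Unset Strict Implicit. Unset Printing Implicit Defensive.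

(* A vertex (i, j) of K_n [] K_m has r_i + c_j - 2 [(i, j) \in S] neighbours in S,
   where r_i and c_j count the elements of S in row i and column j.  If some line
   misses S, every crossing line needs two elements of S, so |S| >= 2n.
   Otherwise every u in S distributes a charge of 4 between its row and its column
   so that each line receives at least 3, and a row receives at least 4 unless it
   holds 1 or 3 elements: 4|S| >= 3(n + m) + #{rows of another size}.  For
   m = n + 2 and n = 3 (mod 4) equality would force all rows to have odd size, so
   |S| would be odd while (3n + 3)/2 is even.  Conversely, block-diagonal sums of
   total 2-dominating sets meeting every line are again such sets, and full rows
   1 x a and columns a x 1 (a >= 3) assemble into sets of the required size. *)

Lemma gamma2t_le (T : finType) (e : rel T) (S : {set T}) :
  total2dom e S -> gamma2t e <= #|S|.
Proof.
rewrite /gamma2t => S_t2d; have : S \in index_enum _ by rewrite mem_index_enum.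
elim: (index_enum _) => // S' r IHr; rewrite inE big_cons => /predU1P[<-|/IHr].
  by rewrite S_t2d geq_minl.
by case: ifP => // _ /(leq_trans (geq_minr _ _)).
Qed.

Lemma gamma2t_ge (T : finType) (e : rel T) k :
  k <= #|T|.+1 -> (forall S, total2dom e S -> k <= #|S|) -> k <= gamma2t e.
Proof.
move=> k_le k_lb; apply: (big_ind (fun x => k <= x)) => // x y kx ky.
by rewrite leq_min kx.
Qed.

Lemma odd_sum_odd (I : finType) (F : I -> nat) :
  (forall i, odd (F i)) -> odd (\sum_i F i) = odd #|I|.
Proof.
move=> oddF; rewrite -sum1_card.
apply: (big_ind2 (fun a b => odd a = odd b)) => // [a b c d|i _].
  by rewrite !oddD => -> ->.
by rewrite oddF.
Qed.

Lemma card_indicator (T : finType) (A : {pred T}) : #|A| = \sum_x (x \in A).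
Proof. by rewrite -sum1_card big_mkcond; apply: eq_bigr => x _; case: (x \in A). Qed.

Section RookLines.
Variables n m : nat.
Implicit Types S : {set 'I_n * 'I_m}.

Definition row_set S i := [set u in S | u.1 == i].
Definition col_set S j := [set u in S | u.2 == j].

Lemma card_KK_nbrs S v :
  #|[set u in S | KK n m v u]| + 2 * (v \in S) = #|row_set S v.1| + #|col_set S v.2|.
Proof.
case: v => i j /=.
have nbrsE : [set u in S | KK n m (i, j) u] =
             (row_set S i :\ (i, j)) :|: (col_set S j :\ (i, j)).
  apply/setP => -[a b]; rewrite !inE /KK /cartadj /Kadj -!pair_eqE /= [i == a]eq_sym [j == b]eq_sym.
  by have [->|] := eqVneq a i; have [->|] := eqVneq b j; rewrite ?andbF ?andbT ?orbF.
have disj : (row_set S i :\ (i, j)) :&: (col_set S j :\ (i, j)) = set0.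
  apply/setP => -[a b]; rewrite !inE -!pair_eqE /=.
  by have [->|] := eqVneq a i; have [->|] := eqVneq b j; rewrite ?andbF.
rewrite nbrsE cardsU disj cards0 subn0.
rewrite [#|row_set S i|](cardsD1 (i, j)) [#|col_set S j|](cardsD1 (i, j)) !inE !eqxx !andbT.
set r := #|_ :\ _|; set c := #|_ :\ _|; by case: (_ \in S); lia.
Qed.

Lemma total2dom_KKP S :
  reflect (forall v, 2 + 2 * (v \in S) <= #|row_set S v.1| + #|col_set S v.2|)
          (total2dom (KK n m) S).
Proof.
apply: (iffP forallP) => t2d v; have := t2d v; have := card_KK_nbrs S v;
  set k := #|[set _ in S | _]|; set r := #|row_set _ _|; set c := #|col_set _ _|;
  by case: (v \in S); lia.
Qed.

Lemma sum_row_sets S (F : 'I_n * 'I_m -> nat) :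
  \sum_(u in S) F u = \sum_i \sum_(u in row_set S i) F u.
Proof.
rewrite (partition_big (fun u => u.1) predT) //=.
by apply: eq_bigr => i _; apply: eq_bigl => u; rewrite inE.
Qed.

Lemma sum_col_sets S (F : 'I_n * 'I_m -> nat) :
  \sum_(u in S) F u = \sum_j \sum_(u in col_set S j) F u.
Proof.
rewrite (partition_big (fun u => u.2) predT) //=.
by apply: eq_bigr => j _; apply: eq_bigl => u; rewrite inE.
Qed.

Lemma sum_card_row_set S : \sum_i #|row_set S i| = #|S|.
Proof.
by rewrite -sum1_card (sum_row_sets S (fun=> 1)); apply: eq_bigr => i _; rewrite sum1_card.
Qed.

Lemma sum_card_col_set S : \sum_j #|col_set S j| = #|S|.
Proof.
by rewrite -sum1_card (sum_col_sets S (fun=> 1)); apply: eq_bigr => j _; rewrite sum1_card.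
Qed.

Lemma card_row_set S i : #|row_set S i| = \sum_(j < m) ((i, j) \in S).
Proof.
have -> : row_set S i = pair i @: [set j | (i, j) \in S].
  apply/setP => -[a b]; rewrite !inE; apply/andP/imsetP => [[Sab /eqP ai]|[j]].
    by exists b; rewrite ?inE -ai.
  by rewrite inE => Sij [-> ->].
by rewrite card_imset ?cardsE ?card_indicator // => j1 j2 [].
Qed.

Lemma card_col_set S j : #|col_set S j| = \sum_(i < n) ((i, j) \in S).
Proof.
have -> : col_set S j = (fun i => (i, j)) @: [set i | (i, j) \in S].
  apply/setP => -[a b]; rewrite !inE; apply/andP/imsetP => [[Sab /eqP bj]|[i]].
    by exists a; rewrite ?inE -bj.
  by rewrite inE => Sij [-> ->].
by rewrite card_imset ?cardsE ?card_indicator // => i1 i2 [].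
Qed.

End RookLines.

Definition share a b := if a == 1 then 3 else if b == 1 then 1 else 2.

Lemma share_sum a b : 4 <= a + b -> share a b + share b a = 4.
Proof. by rewrite /share; case: eqP => ?; case: eqP => ?; lia. Qed.

Definition excess a : bool := (a != 1) && (a != 3).

Lemma sum_share_ge (T : finType) (A : {set T}) (k : T -> nat) :
    0 < #|A| -> (forall u, u \in A -> 4 <= #|A| + k u) ->
  3 + excess #|A| <= \sum_(u in A) share #|A| (k u).
Proof.
rewrite /excess /share => A_gt0 Ak.
have [A1|A_neq1] := eqVneq #|A| 1; first by rewrite sum_nat_const A1.
have [A2|A_neq2] := eqVneq #|A| 2.
  rewrite (eq_bigr (fun=> 2)) ?sum_nat_const ?A2 // => u /Ak.
  by rewrite A2; case: eqP => // ->.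
apply: leq_trans (_ : #|A| <= _); first by case: eqP; lia.
by rewrite -sum1_card leq_sum // => u _; case: ifP.
Qed.

Section Discharging.
Variables (n m : nat) (S : {set 'I_n * 'I_m}).
Hypothesis S_t2d : total2dom (KK n m) S.
Hypothesis rows_meet : forall i, 0 < #|row_set S i|.
Hypothesis cols_meet : forall j, 0 < #|col_set S j|.

Local Notation r i := #|row_set S i|.
Local Notation c j := #|col_set S j|.

Lemma discharging : 3 * (n + m) + \sum_i excess (r i) <= 4 * #|S|.
Proof.
have S_deg u : u \in S -> 4 <= r u.1 + c u.2.
  by move=> Su; have /total2dom_KKP/(_ u) := S_t2d; rewrite Su.
have -> : 4 * #|S| = \sum_(u in S) share (r u.1) (c u.2) + \sum_(u in S) share (c u.2) (r u.1).
  rewrite -big_split -sum1_card big_distrr /=.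
  by apply: eq_bigr => u /S_deg /share_sum ->; rewrite muln1.
have rows : 3 * n + \sum_i excess (r i) <= \sum_(u in S) share (r u.1) (c u.2).
  rewrite sum_row_sets [3 * n]mulnC -{1}(card_ord n) -sum_nat_const -big_split leq_sum // => i _.
  rewrite (eq_bigr (fun u => share (r i) (c u.2))) => [|u]; last by rewrite inE => /andP[_ /eqP->].
  by apply: sum_share_ge => // u; rewrite inE => /andP[Su /eqP <-]; exact: S_deg.
have cols : 3 * m <= \sum_(u in S) share (c u.2) (r u.1).
  rewrite sum_col_sets mulnC -{1}(card_ord m) -sum_nat_const leq_sum // => j _.
  rewrite (eq_bigr (fun u => share (c j) (r u.1))) => [|u]; last by rewrite inE => /andP[_ /eqP->].
  apply: leq_trans (sum_share_ge _ _) => // u.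
  by rewrite inE addnC => /andP[Su /eqP <-]; exact: S_deg.
lia.
Qed.

End Discharging.

Lemma double_le_card_of_empty_row n m (S : {set 'I_n * 'I_m}) i :
  total2dom (KK n m) S -> #|row_set S i| = 0 -> 2 * m <= #|S|.
Proof.
move=> /total2dom_KKP S_t2d ri0.
rewrite -sum_card_col_set mulnC -{1}(card_ord m) -sum_nat_const leq_sum // => j _.
by have := S_t2d (i, j); rewrite /= ri0; case: (_ \in S) => /=; lia.
Qed.

Lemma double_le_card_of_empty_col n m (S : {set 'I_n * 'I_m}) j :
  total2dom (KK n m) S -> #|col_set S j| = 0 -> 2 * n <= #|S|.
Proof.
move=> /total2dom_KKP S_t2d cj0.
rewrite -sum_card_row_set mulnC -{1}(card_ord n) -sum_nat_const leq_sum // => i _.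
by have := S_t2d (i, j); rewrite /= cj0; case: (_ \in S) => /=; lia.
Qed.

Lemma odd_card_of_odd_rows n m (S : {set 'I_n * 'I_m}) :
  (forall i, odd #|row_set S i|) -> odd #|S| = odd n.
Proof. by move=> odd_rows; rewrite -sum_card_row_set odd_sum_odd // card_ord. Qed.

Definition gamma2t_KK_value n :=
  if ~~ odd n then (3 * n + 4) %/ 2
  else if n %% 4 == 1 then (3 * n + 3) %/ 2
  else (3 * n + 5) %/ 2.

Lemma gamma2t_KK_value_le n : 4 <= n -> gamma2t_KK_value n <= 2 * n.
Proof.
by rewrite /gamma2t_KK_value; have := modn2 n; case: (odd n) => /= ? ?; [case: ifP => /eqP|]; lia.
Qed.

Lemma gamma2t_KK_value_add4 n : gamma2t_KK_value (n + 4) = gamma2t_KK_value n + 6.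
Proof.
rewrite /gamma2t_KK_value; have := modn2 n; have := modn2 (n + 4).
by case: (odd (n + 4)) => /= ?; case: (odd n) => /= ?;
  try case: ifP => /eqP ?; try case: ifP => /eqP ?; lia.
Qed.

Lemma gamma2t_KK_value_le_card n (S : {set 'I_n * 'I_(n + 2)}) :
  4 <= n -> total2dom (KK n (n + 2)) S -> gamma2t_KK_value n <= #|S|.
Proof.
move=> n_ge4 S_t2d; have value_le := gamma2t_KK_value_le n_ge4.
have [/forallP rows_meet|/forallPn[i]] := boolP [forall i, 0 < #|row_set S i|]; last first.
  rewrite -eqn0Ngt => /eqP/(double_le_card_of_empty_row S_t2d); lia.
have [/forallP cols_meet|/forallPn[j]] := boolP [forall j, 0 < #|col_set S j|]; last first.
  rewrite -eqn0Ngt => /eqP/(double_le_card_of_empty_col S_t2d); lia.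
have charge := discharging S_t2d rows_meet cols_meet.
have parity : \sum_i excess #|row_set S i| = 0 -> odd #|S| = odd n.
  move/eqP; rewrite sum_nat_eq0 => /forallP no_excess.
  apply: odd_card_of_odd_rows => i; move: (no_excess i).
  by rewrite /excess eqb0 negb_and !negbK => /orP[]/eqP->.
move: charge parity; set B := \sum_i _; set k := #|S| => charge parity.
rewrite /gamma2t_KK_value; have := modn2 n; case odd_n: (odd n) => /= n_mod2; last lia.
case: ifP => /eqP n_mod4; first lia.
have [/parity odd_k|] := eqVneq B 0.
  by have := modn2 k; rewrite odd_k odd_n /=; lia.
rewrite -lt0n; lia.
Qed.

Definition spanning_t2dom n m (S : {set 'I_n * 'I_m}) :=
  [&& total2dom (KK n m) S, [forall i, 0 < #|row_set S i|]
    & [forall j, 0 < #|col_set S j|]].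

Definition spanning_t2dom_le n m k :=
  exists2 S : {set 'I_n * 'I_m}, spanning_t2dom S & #|S| <= k.

Lemma split_lshift k l (a : 'I_k) : split (lshift l a) = inl a.
Proof. exact: (unsplitK (inl a)). Qed.

Lemma split_rshift k l (x : 'I_l) : split (rshift k x) = inr x.
Proof. exact: (unsplitK (inr x)). Qed.

Section BlockSum.
Variables (n m p q : nat) (S : {set 'I_n * 'I_m}) (T : {set 'I_p * 'I_q}).

Definition block_sum : {set 'I_(n + p) * 'I_(m + q)} :=
  [set u | match split u.1, split u.2 with
           | inl a, inl b => (a, b) \in S
           | inr x, inr y => (x, y) \in T
           | _, _ => false
           end].

Lemma mem_block_sum_ll a b : ((lshift p a, lshift q b) \in block_sum) = ((a, b) \in S).
Proof. by rewrite inE /= !split_lshift. Qed.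

Lemma mem_block_sum_lr a y : ((lshift p a, rshift m y) \in block_sum) = false.
Proof. by rewrite inE /= split_lshift split_rshift. Qed.

Lemma mem_block_sum_rl x b : ((rshift n x, lshift q b) \in block_sum) = false.
Proof. by rewrite inE /= split_lshift split_rshift. Qed.

Lemma mem_block_sum_rr x y : ((rshift n x, rshift m y) \in block_sum) = ((x, y) \in T).
Proof. by rewrite inE /= !split_rshift. Qed.

Lemma card_row_block_sum_l a : #|row_set block_sum (lshift p a)| = #|row_set S a|.
Proof.
rewrite !card_row_set big_split_ord /= [X in _ + X]big1 ?addn0 => [|y _].
  by apply: eq_bigr => b _; rewrite mem_block_sum_ll.
by rewrite mem_block_sum_lr.
Qed.

Lemma card_row_block_sum_r x : #|row_set block_sum (rshift n x)| = #|row_set T x|.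
Proof.
rewrite !card_row_set big_split_ord /= big1 ?add0n => [|b _].
  by apply: eq_bigr => y _; rewrite mem_block_sum_rr.
by rewrite mem_block_sum_rl.
Qed.

Lemma card_col_block_sum_l b : #|col_set block_sum (lshift q b)| = #|col_set S b|.
Proof.
rewrite !card_col_set big_split_ord /= [X in _ + X]big1 ?addn0 => [|x _].
  by apply: eq_bigr => a _; rewrite mem_block_sum_ll.
by rewrite mem_block_sum_rl.
Qed.

Lemma card_col_block_sum_r y : #|col_set block_sum (rshift m y)| = #|col_set T y|.
Proof.
rewrite !card_col_set big_split_ord /= big1 ?add0n => [|a _].
  by apply: eq_bigr => x _; rewrite mem_block_sum_rr.
by rewrite mem_block_sum_lr.
Qed.

Lemma card_block_sum : #|block_sum| = #|S| + #|T|.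
Proof.
rewrite -!sum_card_row_set big_split_ord /=.
by congr (_ + _); apply: eq_bigr => i _; rewrite (card_row_block_sum_l, card_row_block_sum_r).
Qed.

Lemma spanning_t2dom_block_sum :
  spanning_t2dom S -> spanning_t2dom T -> spanning_t2dom block_sum.
Proof.
case/and3P => /total2dom_KKP S_t2d /forallP S_rows /forallP S_cols.
case/and3P => /total2dom_KKP T_t2d /forallP T_rows /forallP T_cols.
have two_le r c : 0 < r -> 0 < c -> 2 + 2 * false <= r + c.
  by move=> r_gt0 c_gt0; rewrite muln0 addn0 -[2]/(1 + 1) leq_add.
apply/and3P; split.
- apply/total2dom_KKP => -[i j] /=; rewrite -[i]splitK -[j]splitK.
  case: (split i) => [a|x]; case: (split j) => [b|y] /=.
  + rewrite mem_block_sum_ll card_row_block_sum_l card_col_block_sum_l; exact: (S_t2d (a, b)).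
  + by rewrite mem_block_sum_lr card_row_block_sum_l card_col_block_sum_r two_le.
  + by rewrite mem_block_sum_rl card_row_block_sum_r card_col_block_sum_l two_le.
  + rewrite mem_block_sum_rr card_row_block_sum_r card_col_block_sum_r; exact: (T_t2d (x, y)).
- apply/forallP => i; rewrite -[i]splitK; case: (split i) => [a|x] /=.
  + by rewrite card_row_block_sum_l.
  + by rewrite card_row_block_sum_r.
- apply/forallP => j; rewrite -[j]splitK; case: (split j) => [b|y] /=.
  + by rewrite card_col_block_sum_l.
  + by rewrite card_col_block_sum_r.
Qed.

End BlockSum.

Lemma spanning_t2dom_le_add n m p q k l :
  spanning_t2dom_le n m k -> spanning_t2dom_le p q l ->
  spanning_t2dom_le (n + p) (m + q) (k + l).
Proof.
move=> [S S_span S_card] [T T_span T_card]; exists (block_sum S T).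
  exact: spanning_t2dom_block_sum.
by rewrite card_block_sum leq_add.
Qed.

Lemma spanning_t2dom_le_grid a b :
  0 < a -> 0 < b -> 4 <= a + b -> spanning_t2dom_le a b (a * b).
Proof.
move=> a_gt0 b_gt0 ab_ge4; exists [set: 'I_a * 'I_b]; last by rewrite cardsT card_prod !card_ord.
have rowT i : #|row_set [set: 'I_a * 'I_b] i| = b.
  by rewrite card_row_set (eq_bigr (fun=> 1)) ?sum1_card ?card_ord // => j _; rewrite in_setT.
have colT j : #|col_set [set: 'I_a * 'I_b] j| = a.
  by rewrite card_col_set (eq_bigr (fun=> 1)) ?sum1_card ?card_ord // => i _; rewrite in_setT.
apply/and3P; split; last 2 first.
- by apply/forallP => i; rewrite rowT.
- by apply/forallP => j; rewrite colT.
by apply/total2dom_KKP => v; rewrite rowT colT in_setT [b + a]addnC.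
Qed.

Lemma spanning_t2dom_le_KK_value n :
  4 <= n -> spanning_t2dom_le n (n + 2) (gamma2t_KK_value n).
Proof.
have row a : 3 <= a -> spanning_t2dom_le 1 a a.
  by move=> a_ge3; rewrite -{2}(mul1n a); apply: spanning_t2dom_le_grid => //; lia.
have col a : 3 <= a -> spanning_t2dom_le a 1 a.
  by move=> a_ge3; rewrite -{2}(muln1 a); apply: spanning_t2dom_le_grid => //; lia.
elim/ltn_ind: n => n IH n_ge4.
have [n_le7|n_gt7] := leqP n 7.
  case: n n_ge4 n_le7 {IH} => [|[|[|[|[|[|[|[|]]]]]]]] // _ _.
  - exact: spanning_t2dom_le_add (row 5 _) (col 3 _).
  - exact: spanning_t2dom_le_add (spanning_t2dom_le_add (row 3 _) (row 3 _)) (col 3 _).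
  - exact: spanning_t2dom_le_add (spanning_t2dom_le_add (row 4 _) (col 4 _)) (row 3 _).
  - exact: spanning_t2dom_le_add (spanning_t2dom_le_add (row 5 _) (col 5 _)) (row 3 _).
have -> : n = n - 4 + 4 by lia.
rewrite gamma2t_KK_value_add4 addnAC.
apply: spanning_t2dom_le_add (IH _ _ _) (spanning_t2dom_le_add (row 3 _) (col 3 _)) => //; lia.
Qed.

Theorem theorem15 (n : nat) : 4 <= n ->
  gamma2t (KK n (n + 2)) =
    if ~~ odd n then (3 * n + 4) %/ 2
    else if n %% 4 == 1 then (3 * n + 3) %/ 2
    else (3 * n + 5) %/ 2.
Proof.
move=> n_ge4; rewrite -/(gamma2t_KK_value n); apply/eqP; rewrite eqn_leq.
have [S /and3P[S_t2d _ _] S_card] := spanning_t2dom_le_KK_value n_ge4.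
rewrite (leq_trans (gamma2t_le S_t2d) S_card) /=.
apply: gamma2t_ge => [|T]; last exact: gamma2t_KK_value_le_card.
rewrite card_prod !card_ord; have := gamma2t_KK_value_le n_ge4; nia.
Qed.
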